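(* Let $\ell \ge 1$, $L = 2^\ell$, and let $s$ be an integer with $0 \le s < \ell$. Let $a \in \mathbb{Z}_L$ and let $\langle a\rangle_0, \langle a\rangle_1 \in \mathbb{Z}_L$ satisfy $\langle a\rangle_0 + \langle a\rangle_1 = a$ in $\mathbb{Z}_L$. Let $a_u, a_0, a_1 \in \{0,1,\ldots,2^\ell-1\}$ be the unsigned representatives of $a, \langle a\rangle_0, \langle a\rangle_1$, and write $a_0 = a_0^1\cdot 2^s + a_0^0$, $a_1 = a_1^1 \cdot 2^s + a_1^0$ with $a_0^1,a_0^0,a_1^1,a_1^0\in\mathbb{Z}$ and $0 \le a_0^0, a_1^0 < 2^s$. With $n' = 2^{\ell-1}$, define $$\mathsf{corr} = \begin{cases} -1 & \text{if } (a_u \ge n') \wedge (a_0 < n') \wedge (a_1 < n'),\\ 1 & \text{if } (a_u < n') \wedge (a_0 \ge n') \wedge (a_1 \ge n'),\\ 0 & \text{otherwise.}\end{cases}$$ Then $$(\langle a\rangle_0 \gg s) + (\langle a\rangle_1 \gg s) + \mathsf{corr}\cdot 2^{\ell-s} + \mathbf{1}\{a_0^0 + a_1^0 \ge 2^s\} \equiv (a \gg s) \pmod{L}.$$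
   Context: $\mathbf{1}\{P\}$ is the indicator of $P$. For $x \in \mathbb{Z}_L$ with unsigned representative $x_u \in\{0,\ldots,2^\ell-1\}$, $x \gg s$ denotes the arithmetic right shift by $s$, i.e. $\lfloor (x_u - \mathbf{1}\{x_u \ge 2^{\ell-1}\}\cdot 2^\ell)/2^s \rfloor \bmod 2^\ell$ (floor division of the two's-complement signed value of $x$ by $2^s$, reduced mod $2^\ell$). The sum in the conclusion is taken in $\mathbb{Z}_L$. *)

From mathcomp Require Import all_boot all_order all_algebra.
Set Implicit Arguments. Unset Strict Implicit. Unset Printing Implicit Defensive.
Import Order.TTheory GRing.Theory Num.Theory.
Local Open Scope ring_scope.

(* Z_L with L = 2^l is 'Z_(2^l) (a genuine ring since l >= 1 gives 2^l >= 2).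
   The unsigned representative of x is its value as an ordinal, (x : nat). *)

Definition signed_val (l : nat) (x : 'Z_(2 ^ l)) : int :=
  (x : nat)%:Z - (((2 ^ l.-1)%N <= (x : nat))%N : nat)%:Z * (2 ^ l)%:Z.

(* arithmetic right shift: floor(signed / 2^s) reduced mod 2^l
   ((m %/ d)%Z is floor division for d > 0) *)
Definition ashr (l : nat) (x : 'Z_(2 ^ l)) (s : nat) : 'Z_(2 ^ l) :=
  ((signed_val x %/ (2 ^ s)%:Z)%Z)%:~R.

Definition corr (l : nat) (a a0 a1 : 'Z_(2 ^ l)) : int :=
  let n' := (2 ^ l.-1)%N in
  if [&& (n' <= a)%N, (a0 < n')%N & (a1 < n')%N] then -1
  else if [&& (a < n')%N, (n' <= a0)%N & (n' <= a1)%N] then 1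
  else 0.

From mathcomp Require Import all_boot all_order all_algebra.
From mathcomp Require Import zify ring.
Import Order.TTheory GRing.Theory Num.Theory.
Local Open Scope ring_scope.

(* Two's-complement signed value is additive modulo the wrap-around: sv(a0 + a1)
   = sv(a0) + sv(a1) + corr * 2^l, where corr compares the overflow of
   a0 + a1 past 2^l with the three sign bits.  Flooring this identity by 2^s,
   the term corr * 2^l contributes exactly corr * 2^(l-s), and the floor of
   sv(a0) + sv(a1) is the sum of the floors plus the carry of the low parts.
   Since 2^s divides 2^l, those low parts are the unsigned ones, a0^0 and a1^0. *)

Lemma divz_small2 (r d : int) : 0 <= r < d *+ 2 -> (r %/ d)%Z = ((d <= r)%R : nat)%:Z.
Proof.
move=> /andP[r_ge0 r_lt2d]; have d_gt0 : 0 < d by lia.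
have [d_le_r | r_lt_d] := lerP d r.
  rewrite -[r](subrK d) -{2}[d]mul1r addrC divzMDl ?gt_eqF // divz_small //.
  by rewrite gtz0_abs //; lia.
by rewrite divz_small // gtz0_abs // r_ge0.
Qed.

Lemma divzD_carry (m n d : int) : 0 < d ->
  ((m + n) %/ d)%Z
    = (m %/ d)%Z + (n %/ d)%Z + ((d <= (m %% d)%Z + (n %% d)%Z)%R : nat)%:Z.
Proof.
move=> d_gt0; have d_neq0 := lt0r_neq0 d_gt0.
rewrite {1}(divz_eq m d) {1}(divz_eq n d).
have -> : (m %/ d)%Z * d + (m %% d)%Z + ((n %/ d)%Z * d + (n %% d)%Z)
          = ((m %/ d)%Z + (n %/ d)%Z) * d + ((m %% d)%Z + (n %% d)%Z) by ring.
rewrite divzMDl // (divz_small2 ((m %% d)%Z + (n %% d)%Z)) //.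
have := modz_ge0 m d_neq0; have := modz_ge0 n d_neq0.
have := ltz_pmod m d_gt0; have := ltz_pmod n d_gt0; lia.
Qed.

Lemma Posz_expn_split (b : nat) {m n : nat} : (n <= m)%N ->
  (b ^ m)%:Z = (b ^ (m - n))%:Z * (b ^ n)%:Z.
Proof. by move=> n_le_m; rewrite -PoszM -expnD subnK. Qed.

Section TwosComplement.

Variable l : nat.
Hypothesis l_gt0 : (0 < l)%N.

Let L_gt1 : (1 < 2 ^ l)%N.
Proof. by rewrite -{1}(expn0 2) ltn_exp2l. Qed.

Lemma Zp_val_lt (x : 'Z_(2 ^ l)) : (x < 2 ^ l)%N.
Proof. by case: x => n /=; rewrite Zp_cast. Qed.

Lemma Zp_val_add (x y : 'Z_(2 ^ l)) : (x + y : 'Z_(2 ^ l)) = ((x + y) %% 2 ^ l)%N :> nat.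
Proof. by rewrite -val_Zp_nat // natrD !natr_Zp. Qed.

Lemma signed_valD (x y : 'Z_(2 ^ l)) :
  signed_val (x + y)
    = signed_val x + signed_val y + corr (x + y) x y * (2 ^ l)%:Z.
Proof.
have L_double : (2 ^ l = 2 * 2 ^ l.-1)%N by rewrite -expnS prednK.
rewrite /signed_val /corr Zp_val_add.
move: (Zp_val_lt x) (Zp_val_lt y); move: (x : nat) (y : nat) => m n.
rewrite L_double; move: (2 ^ l.-1)%N => h m_lt n_lt.
have [L_le_mn | mn_lt_L] := leqP (2 * h) (m + n).
  have -> : ((m + n) %% (2 * h) = m + n - 2 * h)%N.
    by rewrite -{1}(subnK L_le_mn) modnDr modn_small; lia.
  by case: (leqP h m) => ?; case: (leqP h n) => ?;
     case: (leqP h (m + n - 2 * h)) => ? /=; lia.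
rewrite modn_small //.
by case: (leqP h m) => ?; case: (leqP h n) => ?; case: (leqP h (m + n)) => ? /=; lia.
Qed.

Lemma signed_val_modz (x : 'Z_(2 ^ l)) s : (s <= l)%N ->
  (signed_val x %% (2 ^ s)%:Z)%Z = ((x : nat)%:Z %% (2 ^ s)%:Z)%Z.
Proof.
move=> s_le_l; rewrite /signed_val (Posz_expn_split 2 s_le_l) mulrA.
by rewrite -mulNr addrC modzMDl.
Qed.

End TwosComplement.

Theorem corollary4p2 (l s : nat) (hl : (1 <= l)%N) (hs : (s < l)%N)
  (a a0 a1 : 'Z_(2 ^ l)) (hsum : a0 + a1 = a)
  (a01 a00 a11 a10 : int)
  (h0 : (a0 : nat)%:Z = a01 * (2 ^ s)%:Z + a00)
  (h1 : (a1 : nat)%:Z = a11 * (2 ^ s)%:Z + a10)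
  (h00 : 0 <= a00 < (2 ^ s)%:Z) (h10 : 0 <= a10 < (2 ^ s)%:Z) :
  ashr a0 s + ashr a1 s + (corr a a0 a1 * (2 ^ (l - s))%:Z)%:~R
    + ((2 ^ s)%:Z <= a00 + a10)%R%:R = ashr a s :> 'Z_(2 ^ l).
Proof.
have d_gt0 : 0 < (2 ^ s)%:Z by rewrite ltz_nat expn_gt0.
have low0 : (signed_val a0 %% (2 ^ s)%:Z)%Z = a00.
  by rewrite signed_val_modz 1?ltnW // h0 modzMDl modz_small.
have low1 : (signed_val a1 %% (2 ^ s)%:Z)%Z = a10.
  by rewrite signed_val_modz 1?ltnW // h1 modzMDl modz_small.
rewrite /ashr -hsum signed_valD // hsum (Posz_expn_split 2 (ltnW hs)) mulrA.
rewrite divzDr ?dvdz_mull ?dvdzz // mulzK ?gt_eqF //.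
rewrite divzD_carry // low0 low1 !intrD.
by rewrite addrAC.
Qed.
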